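(* Let $L$ be a real vector space endowed with a preorder $\le$, let $C\subset L$ be nonempty and $M\subset C$ a nonempty linear subspace such that: $C$ is exhaustive (for every $X\in L$ there is $X_0\in C$ with $X_0\ge X$); $X+m\in C$ for all $X\in C$, $m\in M$; and $X+m\le Y+m$ for all $m\in M$ and $X,Y\in L$ with $X\le Y$. Let $H\colon C\to\mathbb{R}$ be a premium principle and define $$R_{\mathrm{Max}}(X):=\inf\{H(X_0)\mid X_0\in C,\ X_0\ge X\},\quad X\in L.$$ Then $R_{\mathrm{Max}}\colon L\to\mathbb{R}$ is a risk measure with $R_{\mathrm{Max}}(X)\le H(X)$ for all $X\in C$ and $R_{\mathrm{Max}}(m)=H(m)$ for all $m\in M$. In particular, $D_{\mathrm{Min}}(X):=H(X)-R_{\mathrm{Max}}(X)$, $X\in C$, is a deviation measure and $H=R_{\mathrm{Max}}+D_{\mathrm{Min}}$ on $C$. Moreover, if $R\colon L\to\mathbb{R}$ is a risk measure and $D\colon C\to\mathbb{R}$ a deviation measure with $H(X)=R(X)+D(X)$ for all $X\in C$, then $R(X)\le R_{\mathrm{Max}}(X)$ for all $X\in L$ and $D(X)\ge D_{\mathrm{Min}}(X)$ for all $X\in C$.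
   Context: A premium principle is a map $H\colon C\to\mathbb{R}$ with (P1') $H(X+m)=H(X)+H(m)$ for all $X\in C$, $m\in M$; (P2') $H(0)=0$ and $H(X)\ge0$ for all $X\in C$ with $X\ge0$; (P3') $\inf\{H(X_0)\mid X_0\in C,\ X_0\ge X\}>-\infty$ for all $X\in L$. A risk measure is a map $R\colon L\to\mathbb{R}$ with $R(X+m)=R(X)+R(m)$ for all $X\in C$, $m\in M$, and $R(0)=0$, $R(X)\le R(Y)$ for all $X,Y\in L$ with $X\le Y$. A deviation measure is a map $D\colon C\to\mathbb{R}$ with $D(X+m)=D(X)$ for all $X\in C$, $m\in M$, $D(0)=0$, and $D(X)\ge0$ for all $X\in C$. *)

From HB Require Import structures.
From mathcomp Require Import all_boot all_order all_algebra.
From mathcomp Require Import all_classical all_reals.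
Set Implicit Arguments. Unset Strict Implicit. Unset Printing Implicit Defensive.
Import Order.TTheory GRing.Theory Num.Theory.
Local Open Scope ring_scope.
Local Open Scope classical_set_scope.

Section Defs.
Variables (R : realType) (L : lmodType R).

Definition preorder_rel (le : L -> L -> Prop) : Prop :=
  (forall X, le X X) /\ (forall X Y Z, le X Y -> le Y Z -> le X Z).

Definition linear_subspace (M : set L) : Prop :=
  M 0 /\ (forall x y, M x -> M y -> M (x + y)) /\
  (forall (a : R) x, M x -> M (a *: x)).

Definition exhaustive (le : L -> L -> Prop) (C : set L) : Prop :=
  forall X, exists X0, C X0 /\ le X X0.

Definition upper_values (le : L -> L -> Prop) (C : set L) (H : L -> R) (X : L)
  : set R := [set H X0 | X0 in [set X0 | C X0 /\ le X X0]].

(* H : C -> R is represented by a total map whose values off C are irrelevant *)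
Definition premium_principle (le : L -> L -> Prop) (C M : set L) (H : L -> R)
  : Prop :=
  (forall X m, C X -> M m -> H (X + m) = H X + H m) /\
  (H 0 = 0 /\ forall X, C X -> le 0 X -> 0 <= H X) /\
  (forall X, exists b : R, forall X0, C X0 -> le X X0 -> b <= H X0).

Definition risk_measure (le : L -> L -> Prop) (C M : set L) (Rm : L -> R)
  : Prop :=
  (forall X m, C X -> M m -> Rm (X + m) = Rm X + Rm m) /\
  Rm 0 = 0 /\ (forall X Y, le X Y -> Rm X <= Rm Y).

Definition deviation_measure (C M : set L) (D : L -> R) : Prop :=
  (forall X m, C X -> M m -> D (X + m) = D X) /\
  D 0 = 0 /\ (forall X, C X -> 0 <= D X).

Definition R_Max (le : L -> L -> Prop) (C : set L) (H : L -> R) (X : L) : R :=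
  inf (upper_values le C H X).

Definition D_Min (le : L -> L -> Prop) (C : set L) (H : L -> R) (X : L) : R :=
  H X - R_Max le C H X.

End Defs.

From HB Require Import structures.
From mathcomp Require Import all_boot all_order all_algebra.
From mathcomp Require Import all_classical all_reals.
From mathcomp Require Import lra.
Import Order.TTheory GRing.Theory Num.Theory.
Local Open Scope ring_scope.
Local Open Scope classical_set_scope.

(* R_Max X is the infimum of H over the elements of C dominating X, a nonempty
   (exhaustiveness) and bounded below (P3') set.  Hence every monotone map lying
   below H on C lies below R_Max, which gives the maximality of R_Max and, via
   H = R + D, the minimality of D_Min.  Cash additivity of R_Max is inherited
   from H because X0 |-> X0 + m maps {X0 in C | X0 >= X} onto
   {X0 in C | X0 >= X + m}. *)

Lemma linear_subspaceN (R : realType) (L : lmodType R) (M : set L) (m : L) :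
  linear_subspace M -> M m -> M (- m).
Proof. by move=> [_ [_ MZ]] Mm; rewrite -scaleN1r; exact: MZ. Qed.

Section R_Max_infimum.
Set Implicit Arguments.
Variables (R : realType) (L : lmodType R) (le : L -> L -> Prop).
Variables (C : set L) (H : L -> R).
Hypothesis C_exhaustive : exhaustive le C.
Hypothesis H_bounded_below :
  forall X, exists b : R, forall X0, C X0 -> le X X0 -> b <= H X0.

Local Notation RM := (R_Max le C H).

Lemma R_Max_le_upper X X0 : C X0 -> le X X0 -> RM X <= H X0.
Proof.
move=> CX0 leXX0; apply: ge_inf; last by exists X0.
have [b hb] := H_bounded_below X.
by exists b => _ [Y [CY leXY] <-]; exact: hb.
Qed.

Lemma R_Max_ge_lbound X b :
  (forall X0, C X0 -> le X X0 -> b <= H X0) -> b <= RM X.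
Proof.
move=> hb; apply: lb_le_inf; last by move=> _ [Y [CY leXY] <-]; exact: hb.
by have [X0 [CX0 leXX0]] := C_exhaustive X; exists (H X0), X0.
Qed.

Lemma monotone_le_R_Max (Rm : L -> R) :
  (forall X Y, le X Y -> Rm X <= Rm Y) -> (forall X, C X -> Rm X <= H X) ->
  forall X, Rm X <= RM X.
Proof.
move=> Rm_mono Rm_le_H X; apply: R_Max_ge_lbound => X0 CX0 leXX0.
exact: le_trans (Rm_mono _ _ leXX0) (Rm_le_H _ CX0).
Qed.

Hypothesis le_transitive : forall X Y Z, le X Y -> le Y Z -> le X Z.

Lemma R_Max_monotone X Y : le X Y -> RM X <= RM Y.
Proof.
move=> leXY; apply: R_Max_ge_lbound => Y0 CY0 leYY0.
exact/R_Max_le_upper/(le_transitive leXY leYY0).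
Qed.

Hypothesis le_reflexive : forall X, le X X.

Lemma R_Max_le_H X : C X -> RM X <= H X.
Proof. by move=> CX; exact: R_Max_le_upper. Qed.

Hypothesis C0 : C 0.
Hypothesis H0 : H 0 = 0.
Hypothesis H_ge0 : forall X, C X -> le 0 X -> 0 <= H X.

Lemma R_Max0 : RM 0 = 0.
Proof.
apply/eqP; rewrite eq_le; apply/andP; split.
  by rewrite -[X in _ <= X]H0 R_Max_le_H.
exact: R_Max_ge_lbound.
Qed.

Variable M : set L.
Hypothesis M_opp : forall m, M m -> M (- m).
Hypothesis C_translate : forall X m, C X -> M m -> C (X + m).
Hypothesis le_translate : forall m X Y, M m -> le X Y -> le (X + m) (Y + m).
Hypothesis H_translate : forall X m, C X -> M m -> H (X + m) = H X + H m.

Lemma R_Max_translate X m : M m -> RM (X + m) = RM X + H m.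
Proof.
move=> Mm; apply/eqP; rewrite eq_le; apply/andP; split.
  rewrite -lerBlDr; apply: R_Max_ge_lbound => X0 CX0 leXX0.
  rewrite lerBlDr -H_translate //; apply: R_Max_le_upper.
    exact: C_translate.
  exact: le_translate.
apply: R_Max_ge_lbound => Y0 CY0 leXmY0.
have CY0m : C (Y0 - m) := C_translate CY0 (M_opp Mm).
rewrite -[Y0](subrK m) H_translate // lerD2r; apply: R_Max_le_upper => //.
by have := le_translate (M_opp Mm) leXmY0; rewrite addrK.
Qed.

Lemma R_Max_cash m : M m -> RM m = H m.
Proof. by move=> Mm; have := R_Max_translate 0 Mm; rewrite R_Max0 !add0r. Qed.

Lemma deviation_measure_D_Min : deviation_measure C M (D_Min le C H).
Proof.
rewrite /D_Min; split; [|split].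
- move=> X m CX Mm.
  by rewrite H_translate // R_Max_translate // opprD addrACA subrr addr0.
- by rewrite H0 R_Max0 subr0.
- by move=> X CX; rewrite subr_ge0 R_Max_le_H.
Qed.

End R_Max_infimum.

Theorem theorem4p6 (R : realType) (L : lmodType R) (le : L -> L -> Prop)
  (C M : set L) (H : L -> R) :
  preorder_rel le ->
  (exists X, C X) ->
  linear_subspace M ->
  M `<=` C ->
  exhaustive le C ->
  (forall X m, C X -> M m -> C (X + m)) ->
  (forall m X Y, M m -> le X Y -> le (X + m) (Y + m)) ->
  premium_principle le C M H ->
  risk_measure le C M (R_Max le C H) /\
      (forall X, C X -> R_Max le C H X <= H X) /\
      (forall m, M m -> R_Max le C H m = H m) /\
      deviation_measure C M (D_Min le C H) /\
      (forall X, C X -> H X = R_Max le C H X + D_Min le C H X) /\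
      (forall (Rm D : L -> R), risk_measure le C M Rm -> deviation_measure C M D ->
         (forall X, C X -> H X = Rm X + D X) ->
         (forall X, Rm X <= R_Max le C H X) /\
         (forall X, C X -> D_Min le C H X <= D X)).
Proof.
move=> [le_reflexive le_transitive] _ M_lin MC C_exh C_tr le_tr.
move=> [H_tr [[H0 H_ge0] H_lb]].
have M_opp m : M m -> M (- m) by exact: linear_subspaceN.
have C0 : C 0 by apply: MC; case: M_lin.
have cash m : M m -> R_Max le C H m = H m by apply: R_Max_cash.
split; [split; [|split] | split; [|split; [|split; [|split]]]].
- by move=> X m _ Mm; rewrite (R_Max_translate _ _ _ _ M_opp) // (cash m).
- exact: R_Max0.
- by move=> X Y; apply: R_Max_monotone.
- by move=> X; apply: R_Max_le_H.
- exact: cash.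
- exact: deviation_measure_D_Min.
- by move=> X _; rewrite /D_Min addrC subrK.
- move=> Rm D [_ [_ Rm_mono]] [_ [_ D_ge0]] H_eq.
  have Rm_le_H X : C X -> Rm X <= H X by move=> CX; rewrite H_eq // lerDl D_ge0.
  have Rm_le X : Rm X <= R_Max le C H X by apply: monotone_le_R_Max.
  by split=> // X CX; rewrite /D_Min H_eq //; have := Rm_le X; lra.
Qed.
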